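(* For every $n\geq 1$, $\operatorname{diam}(\mathrm{CIM}_n)\leq 2n-2$.
   Context: For a directed acyclic graph (DAG) $\mathcal{G}$ on vertex set $[n]=\{1,\dots,n\}$, the characteristic imset $c_\mathcal{G}$ is the 0/1-vector indexed by the subsets $S\subseteq[n]$ with $|S|\geq 2$, with $c_\mathcal{G}(S)=1$ if there exists $i\in S$ such that $S\subseteq \mathrm{pa}_\mathcal{G}(i)\cup\{i\}$ (where $\mathrm{pa}_\mathcal{G}(i)$ is the set of parents of $i$), and $c_\mathcal{G}(S)=0$ otherwise. The characteristic imset polytope is $\mathrm{CIM}_n=\operatorname{conv}(c_\mathcal{G}\colon \mathcal{G}\text{ a DAG on }[n])$. For a polytope $P$, the vertex-edge graph $G(P)$ has the vertices of $P$ as nodes, with two vertices adjacent iff their convex hull is an edge of $P$; $\operatorname{diam}(P)$ is the maximum over pairs of vertices of the length of a shortest path between them in $G(P)$. *)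

From HB Require Import structures.
From mathcomp Require Import all_boot all_order all_algebra.
From mathcomp Require Import reals.
Set Implicit Arguments. Unset Strict Implicit. Unset Printing Implicit Defensive.
Import Order.TTheory GRing.Theory Num.Theory.
Local Open Scope ring_scope.

(* A directed graph on 'I_n is its set of arcs E; (i, j) \in E means i -> j. *)
Definition arc_rel (n : nat) (E : {set 'I_n * 'I_n}) : rel 'I_n :=
  fun a b => (a, b) \in E.

(* acyclic: no directed cycle, i.e. no arc i -> j with a directed path j ~> i
   (this also excludes loops). *)
Definition acyclic (n : nat) (E : {set 'I_n * 'I_n}) : Prop :=
  forall i j : 'I_n, (i, j) \in E -> ~~ connect (arc_rel E) j i.

Definition parents (n : nat) (E : {set 'I_n * 'I_n}) (i : 'I_n) : {set 'I_n} :=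
  [set j | (j, i) \in E].

Notation coord n := {S : {set 'I_n} | (2 <= #|S|)%N}.

Definition char_imset (R : realType) (n : nat) (E : {set 'I_n * 'I_n})
  : {ffun coord n -> R} :=
  [ffun S : coord n =>
     if [exists i : 'I_n, (i \in val S) && (val S \subset parents E i :|: [set i])]
     then 1 else 0].

(* the (finite) generating point set of CIM_n *)
Definition cim_points (R : realType) (n : nat) (x : {ffun coord n -> R}) : Prop :=
  exists E : {set 'I_n * 'I_n}, acyclic E /\ x = char_imset R E.

Section Polytope.
Variables (R : realType) (I : finType).
Implicit Types (V : {ffun I -> R} -> Prop) (u v x w : {ffun I -> R}).

Definition dotp w x : R := \sum_(i : I) w i * x i.

(* u is a vertex of conv(V): u is the unique maximizer over V of some
   linear functional (then u is the unique maximizer over conv V). *)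
Definition is_vertex V u : Prop :=
  V u /\ exists w, forall x, V x -> x <> u -> dotp w x < dotp w u.

Definition in_segment u v x : Prop :=
  exists t : R, 0 <= t <= 1 /\ forall i, x i = (1 - t) * u i + t * v i.

(* conv{u,v} is an edge of conv(V): u, v distinct vertices and conv{u,v} is the
   face of conv(V) cut out by some linear functional w, i.e. u, v maximize w
   over V and every maximizer in V lies on the segment [u,v]. *)
Definition is_edge V u v : Prop :=
  [/\ is_vertex V u, is_vertex V v, u <> v &
   exists w, [/\ forall x, V x -> dotp w x <= dotp w u,
                 dotp w v = dotp w u &
                 forall x, V x -> dotp w x = dotp w u -> in_segment u v x]].
End Polytope.

Fixpoint ppath (T : Type) (e : T -> T -> Prop) (x : T) (p : seq T) : Prop :=
  if p is y :: p' then e x y /\ ppath e y p' else True.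

Definition dist_le (T : Type) (e : T -> T -> Prop) (u v : T) (k : nat) : Prop :=
  exists p : seq T, [/\ (size p <= k)%N, ppath e u p & last u p = v].

Definition diam_le (R : realType) (I : finType) (V : {ffun I -> R} -> Prop)
  (k : nat) : Prop :=
  forall u v, is_vertex V u -> is_vertex V v -> dist_le (is_edge V) u v k.

(* Every characteristic imset is a 0/1 point, hence a vertex of CIM_n.  From
   any vertex c one walks along edges to the all-ones vector (the imset of a
   complete DAG): call the union of the sets S with c(S) = 0 the zero support,
   pick a node i of it lying in the fewest such S, and make i a sink whose
   parents are all other nodes.  This raises to 1 exactly the coordinates
   containing i, the segment is an edge (cut out by an explicit linear
   functional), and the zero support strictly shrinks.  A nonempty zero support
   has between 2 and n nodes, so at most n - 1 steps are needed from each end. *)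

From mathcomp Require Import all_boot all_order all_algebra.
From mathcomp Require Import reals.
From mathcomp Require Import zify lra.
Set Implicit Arguments. Unset Strict Implicit. Unset Printing Implicit Defensive.
Import Order.TTheory GRing.Theory Num.Theory.
Local Open Scope ring_scope.

Section Distance.
Variables (T : Type) (e : T -> T -> Prop).

Lemma ppath_cat x p q : ppath e x (p ++ q) <-> ppath e x p /\ ppath e (last x p) q.
Proof. by elim: p x => [|y p IH] x /=; [tauto | rewrite IH; tauto]. Qed.

Lemma dist_le_edge x y : e x y -> dist_le e x y 1.
Proof. by exists [:: y]. Qed.

Lemma dist_le_trans x y z k l :
  dist_le e x y k -> dist_le e y z l -> dist_le e x z (k + l).
Proof.
move=> [p [sp ep <-]] [q [sq eq <-]]; exists (p ++ q).
by rewrite size_cat leq_add // last_cat; split=> //; apply/ppath_cat.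
Qed.

Lemma dist_le_leq x y k l : (k <= l)%N -> dist_le e x y k -> dist_le e x y l.
Proof. by move=> kl [p [sp ep lp]]; exists p; rewrite (leq_trans sp kl). Qed.

Hypothesis e_sym : forall x y, e x y -> e y x.

Lemma dist_le_sym x y k : dist_le e x y k -> dist_le e y x k.
Proof.
move=> [p []]; elim: p x k => [|z p IH] x k /=; first by move=> _ _ ->; exists [::].
move=> sp [exz ep] lp; have k_gt0 : (0 < k)%N by apply: leq_trans sp.
rewrite -(prednK k_gt0) -addn1.
apply: dist_le_trans (IH z k.-1 _ ep lp) (dist_le_edge (e_sym exz)).
by rewrite -ltnS prednK.
Qed.

End Distance.

Lemma exists_ffun_neq (I : finType) (T : eqType) (f g : {ffun I -> T}) :
  f <> g -> exists i, f i != g i.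
Proof.
move=> nfg; apply/existsP; apply: contraT; rewrite negb_exists => /forallP fg.
by case: nfg; apply/ffunP => i; apply/eqP; rewrite -[_ == _]negbK.
Qed.

Lemma sumr_lt0_pair (R : realDomainType) (I : finType) (g : I -> R) (a b : I) :
  (forall i, i != a -> g i <= 0) -> b != a -> g b + g a < 0 -> \sum_i g i < 0.
Proof.
move=> g_le0 ba gab; rewrite (bigD1 a) //= (bigD1 b) //=.
suff : \sum_(i | (i != a) && (i != b)) g i <= 0 by lra.
by apply: sumr_le0 => i /andP [/g_le0].
Qed.

Section Polytope.
Variables (R : realType) (I : finType) (V : {ffun I -> R} -> Prop).
Implicit Types (u v x w : {ffun I -> R}).

Lemma dotpB w x y : dotp w x - dotp w y = \sum_i w i * (x i - y i).
Proof. by rewrite /dotp -sumrB; apply: eq_bigr => i _; rewrite mulrBr. Qed.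

Lemma in_segment_l u v : in_segment u v u.
Proof. by exists 0; split=> [|i]; [rewrite lexx ler01 | lra]. Qed.

Lemma in_segment_r u v : in_segment u v v.
Proof. by exists 1; split=> [|i]; [rewrite lexx ler01 | lra]. Qed.

Lemma in_segment_sym u v x : in_segment u v x -> in_segment v u x.
Proof.
move=> [t [/andP [t0 t1] xt]]; exists (1 - t); split; first by apply/andP; lra.
by move=> i; rewrite xt; lra.
Qed.

Lemma is_edge_sym u v : is_edge V u v -> is_edge V v u.
Proof.
move=> [vu vv nuv [w [wmax wvu wseg]]]; split=> //; first by move=> vu_eq; apply: nuv.
exists w; split=> [x /wmax | | x Vx]; rewrite wvu //.
by move=> wxu; apply/in_segment_sym/wseg.
Qed.

Lemma is_edge_unique_argmax u v w :
  is_vertex V u -> is_vertex V v -> u <> v -> dotp w v = dotp w u ->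
  (forall x, V x -> [\/ x = u, x = v | dotp w x < dotp w u]) -> is_edge V u v.
Proof.
move=> vu vv nuv wvu wx; split=> //; exists w; split=> // x /wx.
  by case=> [->|->|/ltW] //; rewrite wvu.
case=> [-> _|-> _|wlt wxu]; [exact: in_segment_l | exact: in_segment_r |].
by rewrite wxu ltxx in wlt.
Qed.

Hypothesis V01 : forall x, V x -> forall i, x i = 0 \/ x i = 1.

(* Over 0/1 points, [x] is the unique maximizer of [y |-> sum_i (2 x_i - 1) y_i]. *)
Lemma is_vertex01 x : V x -> is_vertex V x.
Proof.
move=> Vx; split=> //; exists [ffun i => 2 * x i - 1] => y Vy /exists_ffun_neq [j yxj].
rewrite /dotp (bigD1 j) //= [X in _ < X](bigD1 j) //= !ffunE.
apply: ltr_leD; last first.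
  apply: ler_sum => i _; rewrite ffunE.
  by case: (V01 Vx i) => ->; case: (V01 Vy i) => ->; lra.
move: yxj; case: (V01 Vx j) => ->; case: (V01 Vy j) => -> //; rewrite ?eqxx // => _; lra.
Qed.

End Polytope.

Section Raise.
Variables (R : realType) (n : nat).
Local Notation vec := {ffun coord n -> R}.
Implicit Types (u x : vec) (S : coord n).

Definition zero_coords u (k : 'I_n) : {set coord n} :=
  [set S : coord n | (k \in val S) && (u S == 0)].

Definition zero_support u : {set 'I_n} := [set k | zero_coords u k != set0].

Definition raise (i : 'I_n) u : vec := [ffun S : coord n => if i \in val S then 1 else u S].

Definition ones : vec := [ffun => 1].

(* With [d] zero coordinates of [u] through [i]: the zero support (itself a zero
   coordinate) gets [d - 1] and the other coordinates of [D] get [-1], so the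
   functional takes the same value at [u] and [raise i u], while changing any
   coordinate outside [D] costs [d]. *)
Definition raise_weight u (i : 'I_n) : vec :=
  let D := zero_coords u i in let d : R := #|D|%:R in
  [ffun S : coord n => if S \in D then (if val S == zero_support u then d - 1 else -1)
                       else if u S == 1 then d else - d].

Lemma zero_coord_sub u S : u S = 0 -> val S \subset zero_support u.
Proof.
move=> uS0; apply/subsetP => k kS; rewrite inE; apply/set0Pn; exists S.
by rewrite inE kS uS0 eqxx.
Qed.

Lemma zero_support_card u k : k \in zero_support u -> (2 <= #|zero_support u|)%N.
Proof.
rewrite inE => /set0Pn [S]; rewrite inE => /andP [_ /eqP uS0].
exact: leq_trans (valP S) (subset_leq_card (zero_coord_sub uS0)).
Qed.

Definition zero_support_coord u k (kT : k \in zero_support u) : coord n :=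
  Sub (zero_support u) (zero_support_card kT).

Lemma raise_eq0 u i S : raise i u S = 0 -> u S = 0.
Proof. by rewrite ffunE; case: ifP => // _ /eqP; rewrite oner_eq0. Qed.

Lemma zero_support_raise u i :
  i \in zero_support u -> (#|zero_support (raise i u)| < #|zero_support u|)%N.
Proof.
move=> iT; apply: proper_card; apply/properP; split.
  apply/subsetP => k; rewrite !inE => /set0Pn [S]; rewrite inE => /andP [kS /eqP uS0].
  by apply/set0Pn; exists S; rewrite inE kS (raise_eq0 uS0) eqxx.
exists i => //; rewrite inE negbK; apply/eqP/setP => S; rewrite !inE ffunE.
by case: ifP => //= _; rewrite oner_eq0.
Qed.

Variable P : vec -> Prop.
Hypothesis P01 : forall x, P x -> forall S, x S = 0 \/ x S = 1.
Hypothesis P_sink : forall x, P x -> forall T : coord n, x T = 1 ->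
  exists2 j, j \in val T & forall S, val S \subset val T -> j \in val S -> x S = 1.

Lemma zero_support_eq0 u : P u -> zero_support u = set0 -> u = ones.
Proof.
move=> Pu T0; apply/ffunP => S; rewrite ffunE.
case: (P01 Pu S) => // uS0.
have [k kS] : exists k, k \in val S.
  by apply/set0Pn; rewrite -card_gt0; apply: leq_trans (valP S).
by move: (subsetP (zero_coord_sub uS0) k kS); rewrite T0 inE.
Qed.

(* A sink of the zero support would lie in some zero coordinate. *)
Lemma zero_support_coord_eq0 u k (kT : k \in zero_support u) :
  P u -> u (zero_support_coord kT) = 0.
Proof.
move=> Pu; case: (P01 Pu (zero_support_coord kT)) => // /(P_sink Pu) [j /=].
rewrite inE => /set0Pn [S]; rewrite inE => /andP [jS /eqP uS0] uT1.
by move: (uT1 S (zero_coord_sub uS0) jS); rewrite uS0 => /eqP; rewrite eq_sym oner_eq0.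
Qed.

Section RaiseEdge.
Variables (u : vec) (i : 'I_n).
Hypotheses (Pu : P u) (iT : i \in zero_support u)
  (i_min : forall k, k \in zero_support u -> (#|zero_coords u i| <= #|zero_coords u k|)%N).

Local Notation T := (zero_support_coord iT).
Local Notation D := (zero_coords u i).
Local Notation w := (raise_weight u i).

Lemma zero_support_coord_in : T \in D.
Proof. by rewrite inE iT zero_support_coord_eq0 ?eqxx. Qed.

Lemma zero_coords_eq0 S : S \in D -> u S = 0.
Proof. by rewrite inE => /andP [_ /eqP]. Qed.

Lemma raise_subr S : raise i u S - u S = (S \in D)%:R.
Proof.
rewrite ffunE inE; case: ifP => iS /=; last by rewrite subrr.
by case: (P01 Pu S) => ->; rewrite ?eqxx ?oner_eq0 /=; lra.
Qed.

Lemma dotp_weight_raise : dotp w (raise i u) = dotp w u.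
Proof.
apply/eqP; rewrite -subr_eq0 dotpB.
under eq_bigr do rewrite raise_subr mulr_natr mulrb.
have TD := zero_support_coord_in.
rewrite -big_mkcond (big_setD1 T TD) /= ffunE TD eqxx.
rewrite (eq_bigr (fun _ => -1)) => [|S]; last first.
  rewrite in_setD1 => /andP [nST SD]; rewrite ffunE SD ifF //.
  by apply: contraNF nST => /eqP vS; apply/eqP/val_inj.
by rewrite sumr_const (cardsD1 T D) TD natrD mulNrn /=; apply/eqP; lra.
Qed.

(* A sink [j] of [x] on [T] lies in every coordinate of [D], for otherwise the
   zero coordinates of [u] through [j] would form a proper subset of [D]. *)
Lemma raise_of_agree x :
  P x -> x T = 1 -> (forall S, S \notin D -> x S = u S) -> x = raise i u.
Proof.
move=> Px xT1 x_off; have [j jT x_sink] := P_sink Px xT1.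
have jD S : S \in D -> j \in val S.
  move=> SD; apply: contraT => jS.
  suff : (#|zero_coords u j| < #|D|)%N by rewrite ltnNge i_min.
  apply: proper_card; apply/properP; split; last by exists S; rewrite // inE (negPf jS).
  apply/subsetP => S'; rewrite inE => /andP [jS' /eqP uS'0]; apply: contraT => S'D.
  move: (x_off S' S'D); rewrite (x_sink S' (zero_coord_sub uS'0) jS') uS'0.
  by move/eqP; rewrite oner_eq0.
apply/ffunP => S; rewrite ffunE; case: (boolP (S \in D)) => SD.
  rewrite (x_sink S (zero_coord_sub (zero_coords_eq0 SD)) (jD S SD)).
  by move: SD; rewrite inE => /andP [->].
rewrite x_off //; case: ifP => // iS; case: (P01 Pu S) => // uS0.
by move: SD; rewrite inE iS uS0 eqxx.
Qed.

Lemma dotp_weight_lt x : P x -> x <> u -> x <> raise i u -> dotp w x < dotp w u.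
Proof.
move=> Px xu xv; rewrite -subr_lt0 dotpB.
have TD := zero_support_coord_in.
have d_ge1 : 1 <= (#|D|%:R : R).
  by rewrite ler1n; apply/card_gt0P; exists T.
have uT0 : u T = 0 := zero_coords_eq0 TD.
have wT : w T = #|D|%:R - 1 by rewrite ffunE TD eqxx.
have wD S : S \in D -> S != T -> w S = -1.
  by move=> SD nST; rewrite ffunE SD ifF //; apply: contraNF nST => /eqP vS; apply/eqP/val_inj.
have w_off S : S \notin D -> w S = if u S == 1 then #|D|%:R else - #|D|%:R.
  by move=> SD; rewrite ffunE (negPf SD).
have x01 := P01 Px; have u01 := P01 Pu; have h01 : ((0 : R) == 1) = false.
  by rewrite eq_sym oner_eq0.
have g_le0 S : S != T -> w S * (x S - u S) <= 0.
  move=> nST; case: (boolP (S \in D)) => SD.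
    by rewrite wD // zero_coords_eq0 //; case: (x01 S) => ->; lra.
  by rewrite w_off //; case: (u01 S) => ->; case: (x01 S) => ->; rewrite ?eqxx ?h01; lra.
have gT : w T * (x T - u T) <= #|D|%:R - 1.
  by rewrite wT uT0; case: (x01 T) => ->; lra.
have [/existsP [S0 /andP [S0D xS0]] | /existsPn x_off] :=
  boolP [exists S, (S \notin D) && (x S != u S)].
  have S0T : S0 != T by apply: contraNneq S0D => ->.
  apply: (sumr_lt0_pair g_le0 S0T); move: xS0; rewrite w_off //.
  by case: (u01 S0) => ->; case: (x01 S0) => ->; rewrite ?eqxx ?h01 //= => _; lra.
have {}x_off S : S \notin D -> x S = u S.
  by move=> SD; move: (x_off S); rewrite SD negbK => /eqP.
case: (x01 T) => xT; last by case: xv; apply: raise_of_agree.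
have [S1 xS1] := exists_ffun_neq xu.
have S1D : S1 \in D by apply: contraLR xS1 => /x_off ->; rewrite negbK.
have S1T : S1 != T by apply: contraNneq xS1 => ->; rewrite xT uT0.
apply: (sumr_lt0_pair g_le0 S1T); rewrite wD // wT xT uT0 (zero_coords_eq0 S1D).
by move: xS1; rewrite (zero_coords_eq0 S1D); case: (x01 S1) => ->; rewrite ?eqxx // => _; lra.
Qed.

Lemma is_edge_raise : P (raise i u) -> is_edge P u (raise i u).
Proof.
move=> Pv; apply: (@is_edge_unique_argmax _ _ _ _ _ w).
- exact: is_vertex01 Pu.
- exact: is_vertex01 Pv.
- move=> uv; move: (raise_subr (zero_support_coord iT)).
  by rewrite -uv subrr zero_support_coord_in => /eqP; rewrite eq_sym oner_eq0.
- exact: dotp_weight_raise.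
- move=> x Px; case: (x =P u) => [|xu]; first by constructor 1.
  case: (x =P raise i u) => [|xv]; first by constructor 2.
  by constructor 3; apply: dotp_weight_lt.
Qed.

End RaiseEdge.

Hypothesis P_raise : forall x i, P x -> P (raise i x).

Lemma dist_le_ones u : P u -> dist_le (is_edge P) u ones (#|zero_support u|).-1.
Proof.
have [m] := ubnP #|zero_support u|; elim: m u => // m IH u szu Pu.
have [T0 | [k kT]] := set_0Vmem (zero_support u).
  by rewrite T0 cards0 (zero_support_eq0 Pu T0); exists [::].
have [i iT i_min] := arg_minnP (fun j => #|zero_coords u j|) kT.
have Pv := P_raise i Pu; have lt_uv := zero_support_raise iT.
have := dist_le_trans (dist_le_edge (is_edge_raise Pu iT i_min Pv))
  (IH _ (leq_trans lt_uv szu) Pv).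
by apply: dist_le_leq; have := zero_support_card kT; lia.
Qed.

End Raise.

Section CharImset.
Variables (R : realType) (n : nat).
Implicit Types (E : {set 'I_n * 'I_n}) (i : 'I_n).

Lemma cim01 (x : {ffun coord n -> R}) : cim_points x -> forall S, x S = 0 \/ x S = 1.
Proof. by move=> [E [_ ->]] S; rewrite ffunE; case: ifP; [right | left]. Qed.

Lemma cim_sink (x : {ffun coord n -> R}) : cim_points x -> forall T : coord n, x T = 1 ->
  exists2 j, j \in val T & forall S : coord n, val S \subset val T -> j \in val S -> x S = 1.
Proof.
move=> [E [_ ->]] T; rewrite ffunE; case: ifP => [/existsP [j /andP [jT sT]] _|]; last first.
  by move=> _ /eqP; rewrite eq_sym oner_eq0.
exists j => // S sS jS; rewrite ffunE ifT //.
by apply/existsP; exists j; rewrite jS (subset_trans sS sT).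
Qed.

Definition make_sink E i : {set 'I_n * 'I_n} :=
  [set a | (a.1 != i) && ((a.2 == i) || (a \in E))].

Lemma path_make_sink E i b p :
  path (arc_rel (make_sink E i)) b p -> last b p != i -> path (arc_rel E) b p.
Proof.
elim: p b => //= y p IH b /andP [+ yp]; rewrite /arc_rel inE /=.
case: (y =P i) => [yi _ | _ /andP [_ /= byE] lp]; last by rewrite byE; apply: IH.
by case: p {IH} yp => [|z p] /=; rewrite yi ?eqxx // /arc_rel inE /= eqxx.
Qed.

Lemma acyclic_make_sink E i : acyclic E -> acyclic (make_sink E i).
Proof.
move=> acE a b; rewrite inE /= => /andP [ai abE]; apply/negP => /connectP [p ep la].
case: (b =P i) => [bi | /eqP bi].
  case: p ep la => [|z p] /=; first by move=> _ ab; rewrite ab bi eqxx in ai.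
  by rewrite /arc_rel inE bi eqxx.
rewrite (negPf bi) /= in abE; move/negP: (acE a b abE); apply; apply/connectP; exists p => //.
by apply: path_make_sink ep _; rewrite -la.
Qed.

Lemma char_imset_make_sink E i :
  char_imset R (make_sink E i) = raise i (char_imset R E).
Proof.
apply/ffunP => S; rewrite /char_imset !ffunE; case iS: (i \in val S).
  rewrite ifT //; apply/existsP; exists i; rewrite iS; apply/subsetP => k _.
  by rewrite !inE /= eqxx andbT orbC orbN.
congr (if _ then _ else _); apply: eq_existsb => k; case kS: (k \in val S) => //=.
have sub_off_i j : j \in val S -> j != i by move=> jS; apply: contraFneq iS => <-.
by apply/subsetP/subsetP => sub j jS; move: (sub j jS);
  rewrite !inE /= (sub_off_i j jS) (negPf (sub_off_i k kS)).
Qed.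

Lemma cim_raise (x : {ffun coord n -> R}) i : cim_points x -> cim_points (raise i x).
Proof.
move=> [E [acE ->]]; exists (make_sink E i).
by rewrite char_imset_make_sink; split=> //; apply: acyclic_make_sink.
Qed.

End CharImset.

Local Close Scope ring_scope.

Theorem mainTheorem7 (R : realType) (n : nat) :
  (1 <= n)%N -> diam_le (@cim_points R n) (2 * n - 2).
Proof.
move=> _ u v [Pu _] [Pv _].
have dist_ones x : cim_points x -> dist_le (is_edge (@cim_points R n)) x (ones R n) n.-1.
  move=> Px; apply: dist_le_leq (dist_le_ones (@cim01 R n) (@cim_sink R n) (@cim_raise R n) Px).
  by have := max_card (zero_support x); rewrite card_ord; lia.
have := dist_le_trans (dist_ones u Pu) (dist_le_sym (@is_edge_sym R _ _) (dist_ones v Pv)).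
by apply: dist_le_leq; lia.
Qed.
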